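(* An auction mechanism $(\pi,x)$ with display prices is incentive compatible if and only if for every advertiser $i$, every display price profile $\mathbf{p}$ and every cost-report profile $\mathbf{c}'_{-i}$ of the others: (1) $c_i\mapsto\pi_i(c_i,\mathbf{c}'_{-i},\mathbf{p})$ is non-increasing on $[\underline{c}_i,\overline{c}_i]$; and (2) there is a quantity $U_i(\mathbf{c}'_{-i},\mathbf{p})$ not depending on $i$'s cost report such that for all $c_i\in[\underline{c}_i,\overline{c}_i]$, $$x_i(c_i,\mathbf{c}'_{-i},\mathbf{p})=v_i(c_i,p_i)\pi_i(c_i,\mathbf{c}'_{-i},\mathbf{p})-\lambda_i(p_i)\int_{c_i}^{\overline{c}_i}\pi_i(z,\mathbf{c}'_{-i},\mathbf{p})\,dz-U_i(\mathbf{c}'_{-i},\mathbf{p}).$$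
   Context: There are advertisers $N=\{1,\dots,n\}$ competing for a single ad slot. Advertiser $i$ has a private product cost $c_i\in[\underline{c}_i,\overline{c}_i]$ and sets a display price $p_i$. Her conversion-rate function is $\lambda_i:\mathbb{R}\to(0,1]$, and her value when displayed at price $p_i$ is $v_i(c_i,p_i)=(p_i-c_i)\lambda_i(p_i)$. Each advertiser reports a cost $c_i'\in[\underline{c}_i,\overline{c}_i]$ and a display price $p_i$; write $\mathbf{c}'=(c_i',\mathbf{c}'_{-i})$, $\mathbf{p}=(p_i,\mathbf{p}_{-i})$. An auction mechanism $(\pi,x)$ consists of allocation functions $\pi_i(\mathbf{c}',\mathbf{p})\in\{0,1\}$ (at most one advertiser wins the slot) and payment functions $x_i(\mathbf{c}',\mathbf{p})\in\mathbb{R}$. The utility of advertiser $i$ with true cost $c_i$ is $u_i(c_i,\mathbf{c}',\mathbf{p})=v_i(c_i,p_i)\pi_i(\mathbf{c}',\mathbf{p})-x_i(\mathbf{c}',\mathbf{p})$. The mechanism is incentive compatible (IC) if for all $i$, all $c_i$, all $\mathbf{p}$ and all $\mathbf{c}'$: $u_i(c_i,(c_i,\mathbf{c}'_{-i}),\mathbf{p})\ge u_i(c_i,(c_i',\mathbf{c}'_{-i}),\mathbf{p})$. *)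

From Stdlib Require Import Reals.
From Coquelicot Require Import Coquelicot.
From mathcomp Require Import ssreflect ssrbool eqtype ssrnat fintype.
Open Scope R_scope.

Definition upd {n : nat} (c : 'I_n -> R) (i : 'I_n) (z : R) : 'I_n -> R :=
  fun j => if j == i then z else c j.

Definition admissible {n : nat} (lo hi : 'I_n -> R) (c : 'I_n -> R) : Prop :=
  forall j, lo j <= c j <= hi j.

Definition value {n : nat} (lam : 'I_n -> R -> R) (i : 'I_n) (ci pi : R) : R :=
  (pi - ci) * lam i pi.

Definition utility {n : nat} (lam : 'I_n -> R -> R)
  (alloc pay : 'I_n -> ('I_n -> R) -> ('I_n -> R) -> R)
  (i : 'I_n) (ci : R) (c' p : 'I_n -> R) : R :=
  value lam i ci (p i) * alloc i c' p - pay i c' p.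

Definition mechanism {n : nat} (lo hi : 'I_n -> R)
  (alloc : 'I_n -> ('I_n -> R) -> ('I_n -> R) -> R) : Prop :=
  forall c p, admissible lo hi c ->
    (forall i, alloc i c p = 0 \/ alloc i c p = 1) /\
    (forall i j, i <> j -> alloc i c p = 1 -> alloc j c p = 0).

Definition IC {n : nat} (lo hi : 'I_n -> R) (lam : 'I_n -> R -> R)
  (alloc pay : 'I_n -> ('I_n -> R) -> ('I_n -> R) -> R) : Prop :=
  forall (i : 'I_n) (ci : R) (p c' : 'I_n -> R),
    lo i <= ci <= hi i -> admissible lo hi c' ->
    utility lam alloc pay i ci (upd c' i ci) p >= utility lam alloc pay i ci c' p.

(** Fix an advertiser, the prices and the other reports, and write [u z] for the
    utility of truthfully reporting cost [z] and [s z = lambda * alloc z] for the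
    slope of the value in the cost at report [z]. Reporting [z] with true cost
    [x] yields [u z - s z * (x - z)], so incentive compatibility says exactly
    that [- s] is a subgradient of [u] on the cost interval. Adding the two
    constraints between [x] and [y] forces [s] to be nonincreasing and squeezes
    [u x - u y] between [(y - x) s y] and [(y - x) s x]; the integral of [s]
    over [[x, y]] obeys the same bounds, so [u z - RInt s z hi] has increments
    bounded by [(y - x) (s x - s y)], which telescope over fine subdivisions to
    zero. Conversely, the integral formula gives the constraints back through
    the same bounds on the integral. Integrability of the allocation comes from
    its being a nonincreasing {0,1}-valued step function. *)
From Stdlib Require Import Reals Lra Psatz FunctionalExtensionality.
From Coquelicot Require Import Coquelicot.
From mathcomp Require Import ssreflect ssrbool eqtype ssrnat fintype.
Open Scope R_scope.

Set Implicit Arguments.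
Unset Strict Implicit.

Definition nonincreasing_on (a b : R) (f : R -> R) : Prop :=
  forall x y, a <= x -> x <= y -> y <= b -> f y <= f x.

Definition neg_subgradient_on (a b : R) (u s : R -> R) : Prop :=
  forall x z, a <= x <= b -> a <= z <= b -> u z - s z * (x - z) <= u x.

Lemma ex_RInt_nonincreasing_indicator (a b : R) (f : R -> R) :
  (forall x, a <= x <= b -> f x = 0 \/ f x = 1) -> nonincreasing_on a b f ->
  forall x y, a <= x <= b -> a <= y <= b -> ex_RInt f x y.
Proof.
move=> f01 f_noninc.
suff ex_le : forall x y, a <= x -> x <= y -> y <= b -> ex_RInt f x y.
{ move=> x y Hx Hy; case: (Rle_lt_dec x y) => Hxy.
  - apply: ex_le; lra.
  - apply: ex_RInt_swap; apply: ex_le; lra. }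
move=> x y Hax Hxy Hyb.
(* [f] is 1 before the threshold [t] and 0 after it *)
pose E z := z = x \/ (x <= z <= y /\ f z = 1).
case: (completeness E) => [|| t [t_ub t_lub]].
{ by exists y => z [->|[Hz _]]; lra. }
{ by exists x; left. }
have Hxt : x <= t by apply: t_ub; left.
have Hty : t <= y by apply: t_lub => z [->|[Hz _]]; lra.
apply: (ex_RInt_Chasles _ _ t).
- apply: (ex_RInt_ext (fun _ => 1)); last exact: ex_RInt_const.
  rewrite Rmin_left // Rmax_right // => z Hz.
  case: (f01 z ltac:(lra)) => // fz0.
  have : t <= z; last lra.
  apply: t_lub => w [->|[Hw fw1]]; first lra.
  apply: Rnot_lt_le => Hzw.
  have := f_noninc z w ltac:(lra) ltac:(lra) ltac:(lra); lra.
- apply: (ex_RInt_ext (fun _ => 0)); last exact: ex_RInt_const.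
  rewrite Rmin_left // Rmax_right // => z Hz.
  case: (f01 z ltac:(lra)) => // fz1.
  have : z <= t by apply: t_ub; right; split; [lra|].
  lra.
Qed.

Section NonincreasingIntegral.

Variables (a b : R) (f : R -> R).
Hypothesis f_noninc : nonincreasing_on a b f.
Hypothesis f_int : forall x y, a <= x <= b -> a <= y <= b -> ex_RInt f x y.

Lemma RInt_nonincreasing_le x y :
  a <= x -> x <= y -> y <= b -> RInt f x y <= (y - x) * f x.
Proof.
move=> Hax Hxy Hyb; rewrite -[_ * _]/(scal (y - x) (f x)) -RInt_const.
apply: RInt_le => //; [apply: f_int; lra | exact: ex_RInt_const |].
move=> z Hz; apply: f_noninc; lra.
Qed.

Lemma RInt_nonincreasing_ge x y :
  a <= x <= b -> a <= y <= b -> (y - x) * f y <= RInt f x y.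
Proof.
move=> Hx Hy; case: (Rle_lt_dec x y) => Hxy.
- rewrite -[_ * _]/(scal (y - x) (f y)) -RInt_const.
  apply: RInt_le => //; [exact: ex_RInt_const | apply: f_int; lra |].
  move=> z Hz; apply: f_noninc; lra.
- rewrite -(opp_RInt_swap f y x); last by apply: f_int.
  have : RInt f y x <= RInt (fun _ => f y) y x.
  { apply: RInt_le; [lra | apply: f_int; lra | exact: ex_RInt_const |].
    move=> z Hz; apply: f_noninc; lra. }
  rewrite RInt_const /opp /scal /= /mult /=; lra.
Qed.

End NonincreasingIntegral.

Section IncrementBound.

Variables (a b : R) (s h : R -> R).
Hypothesis s_noninc : nonincreasing_on a b s.
Hypothesis h_incr : forall x y, a <= x -> x <= y -> y <= b ->
  Rabs (h x - h y) <= (y - x) * (s x - s y).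

Lemma increment_bound_mesh (d : R) (N : nat) x y : 0 < d ->
  a <= x -> x <= y -> y <= b -> y - x <= INR N * d ->
  Rabs (h x - h y) <= d * (s x - s y).
Proof.
move=> Hd; elim: N x => [|N IHN] x Hax Hxy Hyb.
- rewrite /= => Hyx; have -> : y = x by lra.
  rewrite Rminus_diag Rabs_R0; lra.
- rewrite S_INR => HN; have := s_noninc Hax Hxy Hyb.
  case: (Rle_lt_dec (y - x) d) => Hstep Hs.
  + apply: Rle_trans (h_incr Hax Hxy Hyb) _; nra.
  + have Hfirst := h_incr (y := x + d) Hax ltac:(lra) ltac:(lra).
    have Hrest := IHN (x + d) ltac:(lra) ltac:(lra) Hyb ltac:(lra).
    have Hsplit : h x - h y = (h x - h (x + d)) + (h (x + d) - h y) by ring.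
    rewrite Hsplit; apply: Rle_trans (Rabs_triang _ _) _.
    replace (x + d - x) with d in Hfirst by ring.
    nra.
Qed.

Lemma eq_of_increment_bound x y : a <= x -> x <= y -> y <= b -> h x = h y.
Proof.
move=> Hax Hxy Hyb.
have Hs : 0 <= s x - s y by have := s_noninc Hax Hxy Hyb; lra.
suff : Rabs (h x - h y) <= 0 by move/Rabs_le_between; lra.
apply: Rle_plus_epsilon => eps Heps; rewrite Rplus_0_l.
pose d := eps / (s x - s y + 1).
have Hd : 0 < d by apply: Rdiv_lt_0_compat; lra.
have [N HN] := INR_unbounded ((y - x) / d).
have HNd : y - x <= INR N * d.
{ have := Rmult_lt_compat_r d _ _ Hd HN; rewrite /Rdiv Rmult_assoc Rinv_l; lra. }
apply: Rle_trans (increment_bound_mesh Hd Hax Hxy Hyb HNd) _.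
have : d * (s x - s y + 1) = eps by rewrite /d; field; lra.
nra.
Qed.

End IncrementBound.

Section NegSubgradient.

Variables (a b : R) (u s : R -> R).

Lemma neg_subgradient_increment x y : neg_subgradient_on a b u s ->
  a <= x -> x <= y -> y <= b ->
  (y - x) * s y <= u x - u y <= (y - x) * s x.
Proof.
move=> Hsub Hax Hxy Hyb.
have := Hsub x y ltac:(lra) ltac:(lra); have := Hsub y x ltac:(lra) ltac:(lra).
lra.
Qed.

Lemma nonincreasing_of_neg_subgradient :
  neg_subgradient_on a b u s -> nonincreasing_on a b s.
Proof.
move=> Hsub x y Hax Hxy Hyb.
have := neg_subgradient_increment Hsub Hax Hxy Hyb.
case: (Req_dec x y) => [-> | Hneq] Hincr; first lra.
apply: (Rmult_le_reg_l (y - x)); lra.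
Qed.

Hypothesis s_noninc : nonincreasing_on a b s.
Hypothesis s_int : forall x y, a <= x <= b -> a <= y <= b -> ex_RInt s x y.

Lemma RInt_split x y : a <= x <= b -> a <= y <= b ->
  RInt s x b = RInt s x y + RInt s y b.
Proof.
move=> Hx Hy; rewrite -(RInt_Chasles s x y b) //; apply: s_int; lra.
Qed.

Lemma neg_subgradient_onE :
  neg_subgradient_on a b u s <-> forall z, a <= z <= b -> u z = u b + RInt s z b.
Proof.
split=> [Hsub | Hu].
- pose h z := u z - RInt s z b.
  suff Hh : forall z, a <= z <= b -> h z = h b.
  { move=> z Hz; have := Hh z Hz; rewrite /h RInt_point /zero /=; lra. }
  move=> z Hz; apply: (eq_of_increment_bound s_noninc); try lra.
  move=> x y Hax Hxy Hyb; apply/Rabs_le_between.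
  rewrite /h (@RInt_split x y); try lra.
  have := neg_subgradient_increment Hsub Hax Hxy Hyb.
  have := RInt_nonincreasing_le s_noninc s_int Hax Hxy Hyb.
  have := RInt_nonincreasing_ge s_noninc s_int (x := x) (y := y) ltac:(lra) ltac:(lra).
  lra.
- move=> x z Hx Hz.
  have := RInt_nonincreasing_ge s_noninc s_int Hx Hz.
  rewrite (Hu x Hx) (Hu z Hz) (@RInt_split x z) //; lra.
Qed.

End NegSubgradient.

Lemma myerson_payment_iff (a b L P : R) (f g : R -> R) :
  0 < L -> (forall z, a <= z <= b -> f z = 0 \/ f z = 1) ->
  neg_subgradient_on a b (fun z => (P - z) * L * f z - g z) (fun z => L * f z) <->
  nonincreasing_on a b f /\
  exists U, forall z, a <= z <= b ->
    g z = (P - z) * L * f z - L * RInt f z b - U.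
Proof.
move=> HL f01; set u := fun z => _ - g z; set s := fun z => L * f z.
have s_nonincE : nonincreasing_on a b s <-> nonincreasing_on a b f.
{ split=> Hmono x y Hax Hxy Hyb; have := Hmono x y Hax Hxy Hyb; rewrite /s.
  - exact: Rmult_le_reg_l.
  - exact: Rmult_le_compat_l (Rlt_le _ _ HL). }
have s_int : nonincreasing_on a b f ->
    forall x y, a <= x <= b -> a <= y <= b -> ex_RInt s x y.
{ move=> f_noninc x y Hx Hy.
  exact: ex_RInt_scal (ex_RInt_nonincreasing_indicator f01 f_noninc Hx Hy). }
have RInt_s : forall z, a <= z <= b -> nonincreasing_on a b f ->
    RInt s z b = L * RInt f z b.
{ move=> z Hz f_noninc; apply: RInt_scal.
  apply: (ex_RInt_nonincreasing_indicator f01 f_noninc Hz); lra. }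
split=> [Hsub | [f_noninc [U HU]]].
- have f_noninc : nonincreasing_on a b f.
  { apply/s_nonincE; exact: nonincreasing_of_neg_subgradient Hsub. }
  have Hu := proj1 (neg_subgradient_onE u (proj2 s_nonincE f_noninc) (s_int f_noninc)) Hsub.
  split=> //; exists (u b) => z Hz.
  have := Hu z Hz; rewrite RInt_s // /u; lra.
- have Hu : forall z, a <= z <= b -> u z = L * RInt f z b + U.
  { move=> z Hz; rewrite /u (HU z Hz); ring. }
  apply/(neg_subgradient_onE u (proj2 s_nonincE f_noninc) (s_int f_noninc)) => z Hz.
  have Hb : a <= b <= b by lra.
  rewrite RInt_s // (Hu z Hz) (Hu b Hb) RInt_point /zero /=; ring.
Qed.

Lemma upd_upd {n : nat} (c : 'I_n -> R) i z w : upd (upd c i z) i w = upd c i w.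
Proof. apply: functional_extensionality => j; rewrite /upd; by case: (j == i). Qed.

Lemma upd_id {n : nat} (c : 'I_n -> R) i : upd c i (c i) = c.
Proof. apply: functional_extensionality => j; rewrite /upd; by case: eqP => [->|]. Qed.

Lemma admissible_upd {n : nat} (lo hi c : 'I_n -> R) i z :
  admissible lo hi c -> lo i <= z <= hi i -> admissible lo hi (upd c i z).
Proof. move=> Hc Hz j; rewrite /upd; by case: eqP => [->|]. Qed.

Lemma utility_misreport {n : nat} (lam : 'I_n -> R -> R)
  (alloc pay : 'I_n -> ('I_n -> R) -> ('I_n -> R) -> R) i (x z : R) c p :
  utility lam alloc pay i x c p =
  utility lam alloc pay i z c p - lam i (p i) * alloc i c p * (x - z).
Proof. rewrite /utility /value; ring. Qed.

Lemma IC_iff_neg_subgradient {n : nat} (lo hi : 'I_n -> R) (lam : 'I_n -> R -> R)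
  (alloc pay : 'I_n -> ('I_n -> R) -> ('I_n -> R) -> R) :
  IC lo hi lam alloc pay <->
  forall i p c, admissible lo hi c ->
    neg_subgradient_on (lo i) (hi i)
      (fun z => utility lam alloc pay i z (upd c i z) p)
      (fun z => lam i (p i) * alloc i (upd c i z) p).
Proof.
split=> [HIC i p c Hc x z Hx Hz | Hsub i x p c Hx Hc].
- have := HIC i x p (upd c i z) Hx (admissible_upd Hc Hz).
  rewrite upd_upd (utility_misreport _ _ _ _ x z (upd c i z)); lra.
- have := Hsub i p c Hc x (c i) Hx (Hc i).
  rewrite upd_id (utility_misreport _ _ _ _ x (c i) c); lra.
Qed.

Theorem theorem1 (n : nat) (lo hi : 'I_n -> R) (lam : 'I_n -> R -> R)
  (alloc pay : 'I_n -> ('I_n -> R) -> ('I_n -> R) -> R)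
  (Hlohi : forall i, lo i <= hi i)
  (Hlam : forall i (q : R), 0 < lam i q <= 1)
  (Hmech : mechanism lo hi alloc) :
  IC lo hi lam alloc pay <->
  (forall (i : 'I_n) (p c' : 'I_n -> R), admissible lo hi c' ->
     (forall z1 z2, lo i <= z1 -> z1 <= z2 -> z2 <= hi i ->
        alloc i (upd c' i z2) p <= alloc i (upd c' i z1) p) /\
     (exists U : R, forall z, lo i <= z <= hi i ->
        pay i (upd c' i z) p =
          value lam i z (p i) * alloc i (upd c' i z) p
          - lam i (p i) * RInt (fun t => alloc i (upd c' i t) p) z (hi i)
          - U)).
Proof.
rewrite IC_iff_neg_subgradient.
have alloc01 : forall i p c, admissible lo hi c -> forall z, lo i <= z <= hi i ->
    alloc i (upd c i z) p = 0 \/ alloc i (upd c i z) p = 1.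
{ move=> i p c Hc z Hz; exact: (proj1 (Hmech _ p (admissible_upd Hc Hz)) i). }
have myerson i p c (Hc : admissible lo hi c) :=
  myerson_payment_iff (p i) (fun z => pay i (upd c i z) p)
    (proj1 (Hlam i (p i))) (alloc01 i p c Hc).
by split=> H i p c Hc; apply/(myerson i p c Hc); apply: H.
Qed.
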